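(* If $f:[-1,1]\to\mathbb{R}$ is $5$-convex, then \[ \int_{-1}^1 f(x)\,dx\;\le\;\tfrac{2}{5}\cdot\tfrac13\bigl(f(-1)+4f(0)+f(1)\bigr)+\tfrac35\Bigl(f\bigl(-\tfrac{\sqrt3}{3}\bigr)+f\bigl(\tfrac{\sqrt3}{3}\bigr)\Bigr)\;\le\;\tfrac16\bigl(f(-1)+f(1)\bigr)+\tfrac56\Bigl(f\bigl(-\tfrac{\sqrt5}{5}\bigr)+f\bigl(\tfrac{\sqrt5}{5}\bigr)\Bigr). \]
   Context: Divided differences are defined recursively by $[x_1;f]:=f(x_1)$ and $[x_1,\dots,x_{m+1};f]:=\frac{[x_2,\dots,x_{m+1};f]-[x_1,\dots,x_m;f]}{x_{m+1}-x_1}$ for pairwise distinct points. For $m\in\mathbb{N}$, a function $f$ on an interval $I$ is called $m$-convex if $[x_1,\dots,x_{m+2};f]\ge 0$ for all pairwise distinct $x_1,\dots,x_{m+2}\in I$. Integrals are Riemann integrals (an $m$-convex function on a compact interval is Riemann integrable). *)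

From Stdlib Require Import Reals List.
From Coquelicot Require Import Coquelicot.
Open Scope R_scope.

(* Divided difference [x_1,...,x_k; f], defined by the recursion
   [x_1;f] = f x_1,
   [x_1..x_{m+1};f] = ([x_2..x_{m+1};f] - [x_1..x_m;f]) / (x_{m+1} - x_1). *)
Fixpoint divdiff_aux (n : nat) (f : R -> R) (xs : list R) : R :=
  match n with
  | O => match xs with x :: _ => f x | nil => 0 end
  | S n' =>
      match xs with
      | x1 :: rest =>
          (divdiff_aux n' f rest - divdiff_aux n' f (removelast xs))
            / (last xs 0 - x1)
      | nil => 0
      end
  end.

Definition divdiff (f : R -> R) (xs : list R) : R :=
  divdiff_aux (pred (length xs)) f xs.

Definition m_convex (m : nat) (Dom : R -> Prop) (f : R -> R) : Prop :=
  forall xs : list R,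
    length xs = (m + 2)%nat -> NoDup xs -> List.Forall Dom xs ->
    0 <= divdiff f xs.

From Stdlib Require Import Reals List Lra Lia Classical.
From Coquelicot Require Import Coquelicot.
Open Scope R_scope.

(* Let p be the quintic interpolating f at -1 and at the five interior nodes of the two
   rules, w the node polynomial of these five nodes, and K >= 0 the divided difference
   of f at all seven nodes.  By the Newton remainder formula and 5-convexity,
   f <= p where w <= 0 and f <= p + 2 K w where w >= 0 (the latter is the interpolant
   at the interior nodes and 1).  Both rules are exact on quintics and see f only
   through p, except at 1 where f = p + 16/15 K; hence
     integral f <= integral p + 2 K (integral of w^+) = integral p + 1358/10125 K,
     middle rule = integral p + 32/225 K,   Lobatto rule = integral p + 40/225 K.
   Integrability of f comes from continuity in the interior (f is squeezed between two
   interpolants) and from one-sided limits at the endpoints (divided differences with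
   one moving node are monotone). *)

(** * Newton interpolation *)

Fixpoint node_poly (xs : list R) (t : R) : R :=
  match xs with nil => 1 | x :: r => node_poly r t * (t - x) end.

(* Newton form of the interpolant of [f] at [xs]; the node [x] of [x :: r] is
   the one added last, with coefficient [divdiff f (x :: r)]. *)
Fixpoint newton (f : R -> R) (xs : list R) (t : R) : R :=
  match xs with
  | nil => 0
  | x :: r => newton f r t + node_poly r t * divdiff f (x :: r)
  end.

Section Newton.

Variable f : R -> R.

Lemma divdiff_singleton x : divdiff f (x :: nil) = f x.
Proof. reflexivity. Qed.

Lemma divdiff_cons_snoc x m y :
  divdiff f (x :: m ++ y :: nil)
  = (divdiff f (m ++ y :: nil) - divdiff f (x :: m)) / (y - x).
Proof.
  unfold divdiff.
  replace (pred (length (x :: m ++ y :: nil))) with (S (length m))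
    by (rewrite length_cons, length_app; simpl; lia).
  replace (pred (length (m ++ y :: nil))) with (length m)
    by (rewrite length_app; simpl; lia).
  cbn [divdiff_aux length pred].
  rewrite app_comm_cons, removelast_last, last_last. reflexivity.
Qed.

Lemma node_poly_snoc xs y t : node_poly (xs ++ y :: nil) t = node_poly xs t * (t - y).
Proof. induction xs as [|x r IH]; simpl; [ring | rewrite IH; ring]. Qed.

Lemma node_poly_eq0 xs t : In t xs -> node_poly xs t = 0.
Proof.
  induction xs as [|x r IH]; simpl; [tauto|].
  intros [->|H]; [ring | rewrite IH by exact H; ring].
Qed.

Lemma node_poly_neq0 xs t : ~ In t xs -> node_poly xs t <> 0.
Proof.
  induction xs as [|x r IH]; simpl; intros H; [lra|].
  apply Rmult_integral_contrapositive_currified; [tauto|].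
  intro E. apply H. left. lra.
Qed.

Lemma newton_snoc xs y t : NoDup (xs ++ y :: nil) ->
  newton f (xs ++ y :: nil) t
  = newton f xs t + node_poly xs t * divdiff f (xs ++ y :: nil).
Proof.
  induction xs as [|x m IH]; intros Hnd; [simpl; ring|].
  inversion Hnd as [|? ? Hx Hm]; subst.
  assert (Hyx : y - x <> 0).
  { intro. apply Hx, in_or_app. right. left. lra. }
  cbn [app newton]. rewrite IH, node_poly_snoc, divdiff_cons_snoc by exact Hm.
  cbn [node_poly]. field. exact Hyx.
Qed.

Lemma newton_head x r : NoDup (x :: r) -> newton f (x :: r) x = f x.
Proof.
  induction r as [|z r IH] using rev_ind; intros Hnd.
  { cbn [newton node_poly]. rewrite divdiff_singleton. ring. }
  rewrite app_comm_cons in Hnd |- *.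
  rewrite newton_snoc, IH by (exact Hnd || exact (NoDup_app_remove_r _ _ Hnd)).
  rewrite node_poly_eq0 by (left; reflexivity). ring.
Qed.

Lemma newton_interp xs y : NoDup xs -> In y xs -> newton f xs y = f y.
Proof.
  induction xs as [|x r IH]; intros Hnd Hin; [destruct Hin|].
  destruct Hin as [<-|Hin]; [exact (newton_head _ _ Hnd)|].
  inversion Hnd; subst. simpl. rewrite IH, node_poly_eq0 by assumption. ring.
Qed.

Lemma newton_remainder xs t : ~ In t xs ->
  f t = newton f xs t + node_poly xs t * divdiff f (xs ++ t :: nil).
Proof.
  induction xs as [|x r IH]; intros Hn.
  { cbn [app newton node_poly]. rewrite divdiff_singleton. ring. }
  assert (Htx : t - x <> 0) by (intro; apply Hn; left; lra).
  simpl in Hn. rewrite IH by tauto. cbn [app newton node_poly].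
  rewrite divdiff_cons_snoc. field. exact Htx.
Qed.

Lemma divdiff_rotate xs t : NoDup xs -> ~ In t xs ->
  divdiff f (t :: xs) = divdiff f (xs ++ t :: nil).
Proof.
  intros Hnd Hn.
  pose proof (newton_head t xs (NoDup_cons _ Hn Hnd)) as Ehead.
  pose proof (newton_remainder xs t Hn) as Erem.
  pose proof (node_poly_neq0 xs t Hn) as Hw.
  cbn [newton] in Ehead.
  apply (Rmult_eq_reg_l (node_poly xs t)); [lra | exact Hw].
Qed.

Lemma node_poly_continuous xs t : continuous (node_poly xs) t.
Proof.
  induction xs as [|x r IH]; simpl; [apply continuous_const|].
  apply (continuous_mult (node_poly r) (fun t => t - x)); [exact IH|].
  apply (continuous_minus (fun t => t) (fun _ => x));
    [apply continuous_id | apply continuous_const].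
Qed.

Lemma newton_continuous xs t : continuous (newton f xs) t.
Proof.
  induction xs as [|x r IH]; simpl; [apply continuous_const|].
  apply (continuous_plus (newton f r) (fun t => node_poly r t * divdiff f (x :: r)));
    [exact IH|].
  apply (continuous_mult (node_poly r) (fun _ => divdiff f (x :: r)));
    [apply node_poly_continuous | apply continuous_const].
Qed.

End Newton.

(** * Regularity of m-convex functions *)

Lemma NoDup_snoc (xs : list R) t : NoDup xs -> ~ In t xs -> NoDup (xs ++ t :: nil).
Proof.
  intros Hnd Hn. apply NoDup_app; [exact Hnd | repeat constructor; simpl; tauto|].
  intros y Hy [<-|[]]. exact (Hn Hy).
Qed.

Lemma continuous_squeeze (g p q : R -> R) x :
  continuous p x -> continuous q x -> p x = g x -> q x = g x ->
  locally x (fun t => (g t - p t) * (g t - q t) <= 0) -> continuous g x.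
Proof.
  intros Hp Hq Ep Eq Hbetween. apply filterlim_locally. intros eps.
  pose proof (proj1 (filterlim_locally _ _) Hp eps) as Np.
  pose proof (proj1 (filterlim_locally _ _) Hq eps) as Nq.
  generalize (filter_and _ _ (filter_and _ _ Np Nq) Hbetween).
  apply filter_imp. intros t [[Bp Bq] Ht].
  change (Rabs (p t - p x) < eps) in Bp. change (Rabs (q t - q x) < eps) in Bq.
  change (Rabs (g t - g x) < eps). rewrite Ep in Bp. rewrite Eq in Bq.
  apply Rabs_def2 in Bp, Bq. apply Rabs_def1;
    destruct (Rle_dec (p t) (q t)); nra.
Qed.

Lemma filterlim_newton_remainder f (F : (R -> Prop) -> Prop) {FF : Filter F} xs z L :
  filter_le F (locally z) ->
  filterlim (fun t => divdiff f (xs ++ t :: nil)) F (locally L) ->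
  F (fun t => ~ In t xs) ->
  filterlim f F (locally (newton f xs z + node_poly xs z * L)).
Proof.
  intros Hz HL Hxs.
  apply (filterlim_ext_loc (fun t => newton f xs t + node_poly xs t * divdiff f (xs ++ t :: nil))).
  { apply (filter_imp _ _ (fun t Ht => eq_sym (newton_remainder f xs t Ht)) Hxs). }
  apply (filterlim_comp_2 (G := locally (newton f xs z)) (H := locally (node_poly xs z * L))
           _ _ Rplus).
  - exact (filterlim_filter_le_1 _ Hz (newton_continuous f xs z)).
  - apply (filterlim_comp_2 (G := locally (node_poly xs z)) (H := locally L) _ _ Rmult);
      [exact (filterlim_filter_le_1 _ Hz (node_poly_continuous xs z)) | exact HL |].
    apply (filterlim_mult (K := R_AbsRing)).
  - apply (filterlim_plus (V := R_NormedModule)).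
Qed.

Lemma monotone_lim_left (G : R -> R) c z M : c < z ->
  (forall s t, c < s -> s < t -> t < z -> G s <= G t) ->
  (forall t, c < t < z -> G t <= M) ->
  exists L, filterlim G (at_left z) (locally L).
Proof.
  intros Hcz Hmono Hbound.
  set (E := fun y => exists t, c < t < z /\ y = G t).
  destruct (completeness E) as [L [HLub HLleast]].
  { exists M. intros y [t [Ht ->]]. exact (Hbound t Ht). }
  { exists (G ((c + z) / 2)), ((c + z) / 2). split; [lra | reflexivity]. }
  exists L. apply filterlim_locally. intros eps.
  assert (Hnear : exists t1, c < t1 < z /\ L - eps < G t1).
  { apply NNPP. intro Hno.
    assert (Hub : is_upper_bound E (L - eps)).
    { intros y [t [Ht ->]]. apply Rnot_lt_le. intro Hlt. apply Hno. exists t. auto. }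
    pose proof (HLleast _ Hub). pose proof (cond_pos eps). lra. }
  destruct Hnear as [t1 [Ht1 HG1]].
  assert (Hd : 0 < z - t1) by lra.
  exists (mkposreal _ Hd). intros t Ht Htz.
  change (Rabs (t - z) < z - t1) in Ht. change (Rabs (G t - L) < eps).
  apply Rabs_def2 in Ht.
  assert (G t1 <= G t) by (apply Hmono; lra).
  assert (G t <= L) by (apply HLub; exists t; split; [lra | reflexivity]).
  apply Rabs_def1; lra.
Qed.

Lemma monotone_lim_right (G : R -> R) c z m : z < c ->
  (forall s t, z < s -> s < t -> t < c -> G s <= G t) ->
  (forall t, z < t < c -> m <= G t) ->
  exists L, filterlim G (at_right z) (locally L).
Proof.
  intros Hzc Hmono Hbound.
  destruct (monotone_lim_left (fun u => - G (- u)) (- c) (- z) (- m)) as [L HL];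
    [lra | intros s t Hs Hst Ht; assert (G (- t) <= G (- s)) by (apply Hmono; lra); lra
     | intros t Ht; assert (m <= G (- t)) by (apply Hbound; lra); lra |].
  exists (- L). apply filterlim_locally. intros eps.
  destruct (proj1 (filterlim_locally _ _) HL eps) as [d Hd].
  exists d. intros t Ht Hzt.
  change (Rabs (t - z) < d) in Ht. change (Rabs (G t - - L) < eps).
  assert (Hmt : ball (- z) d (- t)).
  { change (Rabs (- t - - z) < d).
    rewrite <- Rabs_Ropp. replace (- (- t - - z)) with (t - z) by ring. exact Ht. }
  specialize (Hd (- t) Hmt ltac:(lra)). change (Rabs (- G (- - t) - L) < eps) in Hd.
  rewrite Ropp_involutive in Hd.
  rewrite <- Rabs_Ropp. replace (- (G t - - L)) with (- G t - L) by ring. exact Hd.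
Qed.

Section MConvex.

Variables (m : nat) (Dom : R -> Prop) (f : R -> R).
Hypothesis convex_f : m_convex m Dom f.

Lemma divdiff_snoc_nonneg xs t : length xs = S m -> NoDup xs -> List.Forall Dom xs ->
  Dom t -> ~ In t xs -> 0 <= divdiff f (xs ++ t :: nil).
Proof.
  intros Hl Hnd Hxs Ht Hn. apply convex_f.
  - rewrite length_app, Hl. simpl. lia.
  - exact (NoDup_snoc _ _ Hnd Hn).
  - apply List.Forall_app. split; [exact Hxs | constructor; [exact Ht | constructor]].
Qed.

Lemma m_convex_le_newton xs t : length xs = S m -> NoDup xs -> List.Forall Dom xs ->
  Dom t -> node_poly xs t <= 0 -> f t <= newton f xs t.
Proof.
  intros Hl Hnd Hxs Ht Hw.
  destruct (classic (In t xs)) as [Hin|Hn]; [rewrite newton_interp by assumption; lra|].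
  rewrite (newton_remainder f xs t Hn) at 1.
  pose proof (divdiff_snoc_nonneg xs t Hl Hnd Hxs Ht Hn). nra.
Qed.

Lemma divdiff_snoc_mono ys s t : length ys = m -> NoDup ys -> List.Forall Dom ys ->
  Dom s -> Dom t -> s < t -> ~ In s ys -> ~ In t ys ->
  divdiff f (ys ++ s :: nil) <= divdiff f (ys ++ t :: nil).
Proof.
  intros Hl Hnd Hys Hs Ht Hst Hns Hnt.
  assert (Hts : ~ In t (s :: ys)) by (intros [E|E]; [lra | exact (Hnt E)]).
  pose proof (divdiff_snoc_nonneg (s :: ys) t ltac:(simpl; lia) (NoDup_cons _ Hns Hnd)
                (List.Forall_cons _ Hs Hys) Ht Hts) as H.
  cbn [app] in H. rewrite divdiff_cons_snoc, divdiff_rotate in H by assumption.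
  apply Rmult_le_compat_r with (r := t - s) in H; [|lra].
  unfold Rdiv in H. rewrite Rmult_0_l, Rmult_assoc, Rinv_l, Rmult_1_r in H by lra. lra.
Qed.

(* Adding a node left, resp. right, of [t] to [ys] flips the sign of the remainder at [t]. *)
Lemma m_convex_between_interpolants ys u v t : length ys = m -> NoDup ys ->
  List.Forall Dom ys -> ~ In u ys -> ~ In v ys -> Dom u -> Dom v -> Dom t -> u < t < v ->
  (f t - newton f (u :: ys) t) * (f t - newton f (v :: ys) t) <= 0.
Proof.
  intros Hl Hnd Hys Hu Hv Du Dv Dt Ht.
  destruct (classic (In t ys)) as [Hin|Hn].
  { rewrite (newton_interp f (u :: ys) t) by (constructor; auto || right; exact Hin).
    rewrite Rminus_diag, Rmult_0_l. lra. }
  assert (Hnu : ~ In t (u :: ys)) by (intros [E|E]; [lra | exact (Hn E)]).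
  assert (Hnv : ~ In t (v :: ys)) by (intros [E|E]; [lra | exact (Hn E)]).
  pose proof (divdiff_snoc_nonneg (u :: ys) t ltac:(simpl; lia) (NoDup_cons _ Hu Hnd)
                (List.Forall_cons _ Du Hys) Dt Hnu) as Hdu.
  pose proof (divdiff_snoc_nonneg (v :: ys) t ltac:(simpl; lia) (NoDup_cons _ Hv Hnd)
                (List.Forall_cons _ Dv Hys) Dt Hnv) as Hdv.
  rewrite (newton_remainder f _ t Hnu) at 1. rewrite (newton_remainder f _ t Hnv) at 1.
  cbn [node_poly].
  set (w := node_poly ys t).
  set (du := divdiff f ((u :: ys) ++ t :: nil)). set (dv := divdiff f ((v :: ys) ++ t :: nil)).
  replace ((newton f (u :: ys) t + w * (t - u) * du - newton f (u :: ys) t)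
           * (newton f (v :: ys) t + w * (t - v) * dv - newton f (v :: ys) t))
    with ((w * w) * (du * dv) * ((t - u) * (t - v))) by ring.
  assert (0 <= (w * w) * (du * dv))
    by (apply Rmult_le_pos; [apply Rle_0_sqr | apply Rmult_le_pos; assumption]).
  assert ((t - u) * (t - v) <= 0) by nra.
  nra.
Qed.

Lemma m_convex_continuous_at ys t0 u v : length ys = m -> NoDup ys -> List.Forall Dom ys ->
  In t0 ys -> u < t0 < v -> ~ In u ys -> ~ In v ys ->
  (forall t, u <= t <= v -> Dom t) -> continuous f t0.
Proof.
  intros Hl Hnd Hys Ht0 Huv Hu Hv Hdom.
  apply (continuous_squeeze f (newton f (u :: ys)) (newton f (v :: ys)));
    [apply newton_continuous | apply newton_continuous
    | apply newton_interp; [constructor | right]; assumption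
    | apply newton_interp; [constructor | right]; assumption |].
  assert (Heps : 0 < Rmin (t0 - u) (v - t0)) by (apply Rmin_case; lra).
  exists (mkposreal _ Heps). intros t Ht.
  change (Rabs (t - t0) < Rmin (t0 - u) (v - t0)) in Ht. apply Rabs_def2 in Ht.
  pose proof (Rmin_l (t0 - u) (v - t0)). pose proof (Rmin_r (t0 - u) (v - t0)).
  apply m_convex_between_interpolants; try apply Hdom; try assumption; lra.
Qed.

Lemma m_convex_lim_left ys c z : length ys = m -> NoDup ys -> List.Forall Dom ys -> c < z ->
  (forall t, c < t <= z -> Dom t /\ ~ In t ys) ->
  exists L, filterlim f (at_left z) (locally L).
Proof.
  intros Hl Hnd Hys Hcz Hgap.
  set (G := fun t => divdiff f (ys ++ t :: nil)).
  assert (Hmono : forall s t, c < s -> s < t -> t <= z -> G s <= G t).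
  { intros s t Hs Hst Htz. destruct (Hgap s ltac:(lra)), (Hgap t ltac:(lra)).
    apply divdiff_snoc_mono; assumption. }
  destruct (monotone_lim_left G c z (G z) Hcz) as [L HL];
    [intros; apply Hmono; lra | intros t Ht; apply Hmono; lra |].
  eexists. apply (filterlim_newton_remainder f _ ys z L); [apply filter_le_within | exact HL |].
  exists (mkposreal _ (proj2 (Rlt_0_minus _ _) Hcz)). intros t Ht Htz.
  change (Rabs (t - z) < z - c) in Ht. apply Rabs_def2 in Ht. apply Hgap. lra.
Qed.

Lemma m_convex_lim_right ys c z : length ys = m -> NoDup ys -> List.Forall Dom ys -> z < c ->
  (forall t, z <= t < c -> Dom t /\ ~ In t ys) ->
  exists L, filterlim f (at_right z) (locally L).
Proof.
  intros Hl Hnd Hys Hzc Hgap.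
  set (G := fun t => divdiff f (ys ++ t :: nil)).
  assert (Hmono : forall s t, z <= s -> s < t -> t < c -> G s <= G t).
  { intros s t Hs Hst Htc. destruct (Hgap s ltac:(lra)), (Hgap t ltac:(lra)).
    apply divdiff_snoc_mono; assumption. }
  destruct (monotone_lim_right G c z (G z) Hzc) as [L HL];
    [intros; apply Hmono; lra | intros t Ht; apply Hmono; lra |].
  eexists. apply (filterlim_newton_remainder f _ ys z L); [apply filter_le_within | exact HL |].
  exists (mkposreal _ (proj2 (Rlt_0_minus _ _) Hzc)). intros t Ht Hzt.
  change (Rabs (t - z) < c - z) in Ht. apply Rabs_def2 in Ht. apply Hgap. lra.
Qed.

End MConvex.

Lemma ex_RInt_of_at_one_sided_limits (f : R -> R) a b La Lb : a < b ->
  (forall t, a < t < b -> continuous f t) ->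
  filterlim f (at_right a) (locally La) -> filterlim f (at_left b) (locally Lb) ->
  ex_RInt f a b.
Proof.
  intros Hab Hcont HLa HLb.
  destruct (C0_extension_lt f La Lb a b Hab Hcont HLa HLb) as [g [Hg [Hgf _]]].
  apply (ex_RInt_ext g); [rewrite Rmin_left, Rmax_right by lra; exact Hgf|].
  apply (@ex_RInt_continuous R_CompleteNormedModule). intros z _. apply Hg.
Qed.

Fixpoint grid (c h : R) (n : nat) : list R :=
  match n with O => nil | S n => c :: grid (c + h) h n end.

Lemma length_grid c h n : length (grid c h n) = n.
Proof. revert c; induction n as [|n IH]; intros c; simpl; [|rewrite IH]; reflexivity. Qed.

Lemma grid_bounds c h n t : 0 < h -> In t (grid c h n) -> c <= t < c + INR n * h.
Proof.
  intros Hh. revert c; induction n as [|n IH]; intros c; cbn [grid In]; [tauto|].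
  rewrite S_INR. pose proof (pos_INR n).
  intros [<-|Hin]; [nra|]. specialize (IH _ Hin). lra.
Qed.

Lemma NoDup_grid c h n : 0 < h -> NoDup (grid c h n).
Proof.
  intros Hh. revert c; induction n as [|n IH]; intros c; simpl; constructor; [|apply IH].
  intros Hin. pose proof (grid_bounds _ _ _ _ Hh Hin). lra.
Qed.

Section Interval.

Variables (n : nat) (a b : R) (f : R -> R).
Hypothesis convex_f : m_convex (S n) (fun x => a <= x <= b) f.

Lemma m_convex_continuous_interior t0 : a < t0 < b -> continuous f t0.
Proof.
  intros Ht0.
  set (h := Rmin (t0 - a) (b - t0) / (INR n + 2)).
  assert (Hn : 0 < INR n + 2) by (pose proof (pos_INR n); lra).
  assert (Hh : 0 < h) by (apply Rdiv_lt_0_compat; [apply Rmin_case|]; lra).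
  assert (Hfit : (INR n + 2) * h <= Rmin (t0 - a) (b - t0)) by (unfold h; right; field; lra).
  pose proof (Rmin_l (t0 - a) (b - t0)). pose proof (Rmin_r (t0 - a) (b - t0)).
  pose proof (pos_INR n).
  assert (Hgrid : forall t, In t (grid (t0 + 2 * h) h n) -> t0 + 2 * h <= t < b).
  { intros t Ht. pose proof (grid_bounds _ _ _ _ Hh Ht). nra. }
  apply (m_convex_continuous_at (S n) _ f convex_f (t0 :: grid (t0 + 2 * h) h n) t0
           (t0 - h) (t0 + h)).
  - simpl. rewrite length_grid. reflexivity.
  - constructor; [intros Hin; specialize (Hgrid _ Hin); lra | apply NoDup_grid, Hh].
  - constructor; [lra|]. apply Forall_forall. intros t Ht. specialize (Hgrid _ Ht). nra.
  - left. reflexivity.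
  - lra.
  - intros [E|Hin]; [lra | specialize (Hgrid _ Hin); lra].
  - intros [E|Hin]; [lra | specialize (Hgrid _ Hin); lra].
  - intros t Ht. nra.
Qed.

Lemma m_convex_ex_RInt : a < b -> ex_RInt f a b.
Proof.
  intros Hab.
  set (h := (b - a) / (2 * INR (S n))).
  assert (Hn : 0 < INR (S n)) by apply lt_0_INR, Nat.lt_0_succ.
  assert (Hh : 0 < h) by (apply Rdiv_lt_0_compat; lra).
  set (ys := grid ((3 * a + b) / 4) h (S n)).
  assert (Hys : forall t, In t ys -> (3 * a + b) / 4 <= t < (a + 3 * b) / 4).
  { intros t Ht. pose proof (grid_bounds _ _ _ _ Hh Ht).
    replace (INR (S n) * h) with ((b - a) / 2) in * by (unfold h; field; lra). lra. }
  assert (Hdom : List.Forall (fun x => a <= x <= b) ys)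
    by (apply Forall_forall; intros t Ht; specialize (Hys _ Ht); lra).
  destruct (m_convex_lim_right (S n) _ f convex_f ys ((3 * a + b) / 4) a
              (length_grid _ _ _) (NoDup_grid _ _ _ Hh) Hdom ltac:(lra)) as [La HLa].
  { intros t Ht. split; [lra | intros Hin; specialize (Hys _ Hin); lra]. }
  destruct (m_convex_lim_left (S n) _ f convex_f ys ((a + 3 * b) / 4) b
              (length_grid _ _ _) (NoDup_grid _ _ _ Hh) Hdom ltac:(lra)) as [Lb HLb].
  { intros t Ht. split; [lra | intros Hin; specialize (Hys _ Hin); lra]. }
  exact (ex_RInt_of_at_one_sided_limits f a b La Lb Hab m_convex_continuous_interior HLa HLb).
Qed.

End Interval.

(** * Polynomial functions and the two quadrature rules *)

Fixpoint horner (cs : list R) (t : R) : R :=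
  match cs with nil => 0 | c :: cs' => c + t * horner cs' t end.

(* [g] is a polynomial function of degree less than [n]. *)
Definition is_poly (n : nat) (g : R -> R) : Prop :=
  exists cs, (length cs <= n)%nat /\ forall t, g t = horner cs t.

Fixpoint poly_add (cs ds : list R) : list R :=
  match cs with
  | nil => ds
  | c :: cs' => match ds with nil => cs | d :: ds' => (c + d) :: poly_add cs' ds' end
  end.

Lemma horner_poly_add cs ds t : horner (poly_add cs ds) t = horner cs t + horner ds t.
Proof.
  revert ds; induction cs as [|c cs IH]; intros [|d ds]; simpl; try rewrite IH; ring.
Qed.

Lemma length_poly_add cs ds : length (poly_add cs ds) = Nat.max (length cs) (length ds).
Proof. revert ds; induction cs as [|c cs IH]; intros [|d ds]; simpl; auto. Qed.

Lemma horner_pad cs k t : horner (cs ++ repeat 0 k) t = horner cs t.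
Proof.
  induction cs as [|c cs IH]; simpl; [|rewrite IH; ring].
  induction k as [|k IHk]; simpl; [|rewrite IHk]; ring.
Qed.

Lemma is_poly_ext n g h : (forall t, g t = h t) -> is_poly n g -> is_poly n h.
Proof.
  intros Hgh [cs [Hl Hg]]. exists cs. split; [exact Hl | intros t; rewrite <- Hgh; apply Hg].
Qed.

Lemma is_poly_const c : is_poly 1 (fun _ => c).
Proof. exists (c :: nil). split; [auto | intros; simpl; ring]. Qed.

Lemma is_poly_mono n k g : (n <= k)%nat -> is_poly n g -> is_poly k g.
Proof. intros Hnk [cs [Hl Hg]]. exists cs. split; [lia | exact Hg]. Qed.

Lemma is_poly_add n g h : is_poly n g -> is_poly n h -> is_poly n (fun t => g t + h t).
Proof.
  intros [cs [Hcs Hg]] [ds [Hds Hh]]. exists (poly_add cs ds).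
  rewrite length_poly_add. split; [lia|]. intros t. rewrite horner_poly_add, Hg, Hh. reflexivity.
Qed.

Lemma is_poly_scal n g k : is_poly n g -> is_poly n (fun t => g t * k).
Proof.
  intros [cs [Hl Hg]]. exists (map (fun c => c * k) cs). rewrite length_map. split; [exact Hl|].
  intros t. rewrite Hg. clear Hl Hg. induction cs as [|c cs IH]; simpl; [|rewrite <- IH]; ring.
Qed.

Lemma is_poly_mul_linear n g x : is_poly n g -> is_poly (S n) (fun t => g t * (t - x)).
Proof.
  intros Hg.
  assert (Hshift : is_poly (S n) (fun t => t * g t)).
  { destruct Hg as [cs [Hl Hg]]. exists (0 :: cs). split; [simpl; lia|].
    intros t. simpl. rewrite Hg. ring. }
  apply (is_poly_ext _ (fun t => t * g t + g t * - x)); [intros; ring|].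
  apply (is_poly_add _ _ _ Hshift), (is_poly_mono n); [lia | exact (is_poly_scal _ _ _ Hg)].
Qed.

Lemma is_poly_node_poly xs : is_poly (S (length xs)) (node_poly xs).
Proof.
  induction xs as [|x r IH]; [apply is_poly_const|]. exact (is_poly_mul_linear _ _ x IH).
Qed.

Lemma is_poly_newton f xs : is_poly (length xs) (newton f xs).
Proof.
  induction xs as [|x r IH].
  - exists nil. split; [auto | reflexivity].
  - apply is_poly_add; [exact (is_poly_mono _ _ _ (Nat.le_succ_diag_r _) IH)|].
    exact (is_poly_scal _ _ _ (is_poly_node_poly r)).
Qed.

Lemma is_poly_6_coeffs g : is_poly 6 g ->
  exists c0 c1 c2 c3 c4 c5, forall t, g t = horner (c0 :: c1 :: c2 :: c3 :: c4 :: c5 :: nil) t.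
Proof.
  intros [cs [Hl Hg]].
  assert (Hlen : length (cs ++ repeat 0 (6 - length cs)) = 6%nat)
    by (rewrite length_app, repeat_length; lia).
  destruct (cs ++ repeat 0 (6 - length cs)) as [|c0 [|c1 [|c2 [|c3 [|c4 [|c5 [|]]]]]]] eqn:E;
    try discriminate Hlen.
  exists c0, c1, c2, c3, c4, c5. intros t. rewrite Hg, <- (horner_pad cs (6 - length cs)), E.
  reflexivity.
Qed.

Lemma horner_6_even c0 c1 c2 c3 c4 c5 x :
  horner (c0 :: c1 :: c2 :: c3 :: c4 :: c5 :: nil) (- x)
  + horner (c0 :: c1 :: c2 :: c3 :: c4 :: c5 :: nil) x
  = 2 * (c0 + c2 * x ^ 2 + c4 * (x ^ 2) ^ 2).
Proof. simpl. ring. Qed.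

Lemma is_RInt_horner_6 c0 c1 c2 c3 c4 c5 :
  is_RInt (horner (c0 :: c1 :: c2 :: c3 :: c4 :: c5 :: nil)) (-1) 1
    (2 * c0 + 2 / 3 * c2 + 2 / 5 * c4).
Proof.
  set (P := fun t => c0 * t + c1 * t ^ 2 / 2 + c2 * t ^ 3 / 3 + c3 * t ^ 4 / 4
                     + c4 * t ^ 5 / 5 + c5 * t ^ 6 / 6).
  replace (2 * c0 + 2 / 3 * c2 + 2 / 5 * c4) with (P 1 - P (-1)) by (unfold P; field).
  apply (is_RInt_derive P).
  - intros t _. unfold P. auto_derive; [exact I | simpl; field].
  - intros t _. simpl. apply continuity_pt_filterlim.
    repeat first [ apply continuity_pt_plus | apply continuity_pt_mult
                 | apply continuity_pt_id | apply continuity_pt_const; intros ? ?; reflexivity ].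
Qed.

Definition simpson_gauss_rule (g : R -> R) : R :=
  2 / 5 * (1 / 3 * (g (-1) + 4 * g 0 + g 1)) + 3 / 5 * (g (- (sqrt 3 / 3)) + g (sqrt 3 / 3)).

Definition lobatto_rule (g : R -> R) : R :=
  1 / 6 * (g (-1) + g 1) + 5 / 6 * (g (- (sqrt 5 / 5)) + g (sqrt 5 / 5)).

Lemma sqrt_div_sq k : 0 < k -> (sqrt k / k) ^ 2 = 1 / k.
Proof.
  intros Hk. replace ((sqrt k / k) ^ 2) with (sqrt k * sqrt k / (k * k)) by (field; lra).
  rewrite sqrt_sqrt by lra. field. lra.
Qed.

Lemma simpson_gauss_rule_exact g : is_poly 6 g -> is_RInt g (-1) 1 (simpson_gauss_rule g).
Proof.
  intros Hg. destruct (is_poly_6_coeffs g Hg) as (c0 & c1 & c2 & c3 & c4 & c5 & E).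
  replace (simpson_gauss_rule g) with (2 * c0 + 2 / 3 * c2 + 2 / 5 * c4).
  - eapply is_RInt_ext; [intros; symmetry; apply E | apply is_RInt_horner_6].
  - unfold simpson_gauss_rule. rewrite !E, horner_6_even, sqrt_div_sq by lra. simpl. field.
Qed.

Lemma lobatto_rule_exact g : is_poly 6 g -> is_RInt g (-1) 1 (lobatto_rule g).
Proof.
  intros Hg. destruct (is_poly_6_coeffs g Hg) as (c0 & c1 & c2 & c3 & c4 & c5 & E).
  replace (lobatto_rule g) with (2 * c0 + 2 / 3 * c2 + 2 / 5 * c4).
  - eapply is_RInt_ext; [intros; symmetry; apply E | apply is_RInt_horner_6].
  - unfold lobatto_rule. rewrite !E, horner_6_even, sqrt_div_sq by lra. simpl. field.
Qed.

Lemma is_RInt_pos_part_nonneg (g G : R -> R) u v : u <= v ->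
  (forall t, u <= t <= v -> is_derive G t (g t)) ->
  (forall t, u <= t <= v -> continuous g t) ->
  (forall t, u < t < v -> 0 <= g t) ->
  is_RInt (fun t => Rmax (g t) 0) u v (G v - G u).
Proof.
  intros Huv HG Hg Hpos.
  apply (is_RInt_ext g); [rewrite Rmin_left, Rmax_right by exact Huv;
                          intros t Ht; symmetry; apply Rmax_left, Hpos, Ht|].
  apply (is_RInt_derive G g); rewrite Rmin_left, Rmax_right by exact Huv; assumption.
Qed.

Lemma is_RInt_pos_part_nonpos (g : R -> R) u v : u <= v ->
  (forall t, u < t < v -> g t <= 0) -> is_RInt (fun t => Rmax (g t) 0) u v 0.
Proof.
  intros Huv Hneg.
  apply (is_RInt_ext (fun _ => 0)); [rewrite Rmin_left, Rmax_right by exact Huv;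
                                     intros t Ht; symmetry; apply Rmax_right, Hneg, Ht|].
  replace 0 with (scal (v - u) 0) at 1 by apply Rmult_0_r.
  apply (@is_RInt_const R_NormedModule).
Qed.

Definition quad_nodes : list R :=
  - (sqrt 3 / 3) :: - (sqrt 5 / 5) :: 0 :: sqrt 5 / 5 :: sqrt 3 / 3 :: nil.

Lemma quad_nodes_bounds : 0 < sqrt 5 / 5 < sqrt 3 / 3 /\ sqrt 3 / 3 < 1.
Proof.
  pose proof (sqrt_div_sq 5 ltac:(lra)). pose proof (sqrt_div_sq 3 ltac:(lra)).
  assert (0 < sqrt 5 / 5) by (apply Rdiv_lt_0_compat; [apply sqrt_lt_R0|]; lra).
  assert (0 < sqrt 3 / 3) by (apply Rdiv_lt_0_compat; [apply sqrt_lt_R0|]; lra).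
  split; [split|]; nra.
Qed.

Lemma node_poly_quad_nodes t :
  node_poly quad_nodes t = t * (t ^ 2 - 1 / 5) * (t ^ 2 - 1 / 3).
Proof.
  rewrite <- (sqrt_div_sq 5), <- (sqrt_div_sq 3) by lra.
  unfold quad_nodes. cbn [node_poly]. ring.
Qed.

Lemma pow2_gt_of_abs_gt t c : 0 < c -> c < Rabs t -> c ^ 2 < t ^ 2.
Proof. intros. rewrite <- (pow2_abs t). nra. Qed.
Lemma pow2_lt_of_abs_lt t c : 0 < c -> Rabs t < c -> t ^ 2 < c ^ 2.
Proof. intros. rewrite <- (pow2_abs t). pose proof (Rabs_pos t). nra. Qed.
Lemma odd_quintic_sign a b t : 0 < a < b ->
  ((t < - b \/ - a < t < 0 \/ a < t < b) -> t * ((t ^ 2 - a ^ 2) * (t ^ 2 - b ^ 2)) < 0) /\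
  ((- b < t < - a \/ 0 < t < a \/ b < t) -> 0 < t * ((t ^ 2 - a ^ 2) * (t ^ 2 - b ^ 2))).
Proof.
  intros Hab.
  assert (Habs : (t < 0 -> Rabs t = - t) /\ (0 < t -> Rabs t = t))
    by (split; intros; [apply Rabs_left | apply Rabs_right]; lra).
  split; intros [Ht|[Ht|Ht]];
  (first [ assert (a ^ 2 < t ^ 2) by (apply pow2_gt_of_abs_gt; lra)
        | assert (t ^ 2 < a ^ 2) by (apply pow2_lt_of_abs_lt; lra) ]);
  (first [ assert (b ^ 2 < t ^ 2) by (apply pow2_gt_of_abs_gt; lra)
        | assert (t ^ 2 < b ^ 2) by (apply pow2_lt_of_abs_lt; lra) ]);
  (first [ assert (0 < (t ^ 2 - a ^ 2) * (t ^ 2 - b ^ 2)) by nra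
         | assert ((t ^ 2 - a ^ 2) * (t ^ 2 - b ^ 2) < 0) by nra ]);
  nra.
Qed.

Lemma is_RInt_pos_part_quad_node_poly :
  is_RInt (fun t => Rmax (t * (t ^ 2 - 1 / 5) * (t ^ 2 - 1 / 3)) 0) (-1) 1 (679 / 10125).
Proof.
  set (w := fun t => t * (t ^ 2 - 1 / 5) * (t ^ 2 - 1 / 3)).
  set (W := fun t => (t ^ 2) ^ 3 / 6 - 2 / 15 * (t ^ 2) ^ 2 + t ^ 2 / 30).
  destruct quad_nodes_bounds as [[Ha Hab] Hb1].
  set (a := sqrt 5 / 5) in *. set (b := sqrt 3 / 3) in *.
  assert (Ha2 : a ^ 2 = 1 / 5) by (apply sqrt_div_sq; lra).
  assert (Hb2 : b ^ 2 = 1 / 3) by (apply sqrt_div_sq; lra).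
  assert (HW : forall t, is_derive W t (w t))
    by (intros t; unfold W, w; auto_derive; [exact I | field]).
  assert (Hw : forall t, continuous w t).
  { intros t. apply continuity_pt_filterlim. unfold w.
    repeat first [ apply continuity_pt_minus | apply continuity_pt_mult | apply continuity_pt_id
                 | apply continuity_pt_const; intros ? ?; reflexivity
                 | apply derivable_continuous_pt, derivable_pt_pow ]. }
  assert (Hsign : forall t, w t = t * ((t ^ 2 - a ^ 2) * (t ^ 2 - b ^ 2)))
    by (intros t; unfold w; rewrite Ha2, Hb2; ring).
  assert (Up : forall u v, u <= v ->
            (forall t, u < t < v -> - b < t < - a \/ 0 < t < a \/ b < t) ->
            is_RInt (fun t => Rmax (w t) 0) u v (W v - W u)).
  { intros u v Huv Hpiece. apply is_RInt_pos_part_nonneg; auto.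
    intros t Ht. rewrite Hsign. apply Rlt_le, (odd_quintic_sign a b t); auto. }
  assert (Down : forall u v, u <= v ->
            (forall t, u < t < v -> t < - b \/ - a < t < 0 \/ a < t < b) ->
            is_RInt (fun t => Rmax (w t) 0) u v 0).
  { intros u v Huv Hpiece. apply is_RInt_pos_part_nonpos; auto.
    intros t Ht. rewrite Hsign. apply Rlt_le, (odd_quintic_sign a b t); auto. }
  pose proof (Down (-1) (- b) ltac:(lra) ltac:(intros; lra)) as I1.
  pose proof (Up (- b) (- a) ltac:(lra) ltac:(intros; lra)) as I2.
  pose proof (Down (- a) 0 ltac:(lra) ltac:(intros; lra)) as I3.
  pose proof (Up 0 a ltac:(lra) ltac:(intros; lra)) as I4.
  pose proof (Down a b ltac:(lra) ltac:(intros; lra)) as I5.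
  pose proof (Up b 1 ltac:(lra) ltac:(intros; lra)) as I6.
  pose proof (is_RInt_Chasles _ _ _ _ _ _ (is_RInt_Chasles _ _ _ _ _ _
               (is_RInt_Chasles _ _ _ _ _ _ (is_RInt_Chasles _ _ _ _ _ _
                 (is_RInt_Chasles _ _ _ _ _ _ I1 I2) I3) I4) I5) I6) as I.
  match type of I with is_RInt _ _ _ ?v => replace (679 / 10125) with v; [exact I|] end.
  unfold plus; simpl. unfold W.
  replace ((- a) ^ 2) with (a ^ 2) by ring. replace ((- b) ^ 2) with (b ^ 2) by ring.
  rewrite Ha2, Hb2. field.
Qed.

Section Proposition4.

Variable f : R -> R.
Hypothesis convex_f : m_convex 5 (fun x => -1 <= x <= 1) f.

Lemma quad_nodes_in_interval : List.Forall (fun x => -1 <= x <= 1) quad_nodes.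
Proof. destruct quad_nodes_bounds. unfold quad_nodes. repeat constructor; lra. Qed.

Lemma NoDup_quad_nodes_ends : NoDup (-1 :: quad_nodes ++ 1 :: nil).
Proof.
  destruct quad_nodes_bounds as [[Ha Hab] Hb].
  unfold quad_nodes. cbn [app].
  repeat (constructor; [cbn [In]; intuition lra|]). constructor.
Qed.

Lemma NoDup_quad_nodes_left : NoDup (-1 :: quad_nodes).
Proof.
  pose proof NoDup_quad_nodes_ends as H. rewrite app_comm_cons in H.
  exact (NoDup_app_remove_r _ _ H).
Qed.

Lemma NoDup_quad_nodes_right : NoDup (quad_nodes ++ 1 :: nil).
Proof. pose proof NoDup_quad_nodes_ends as H. inversion H. assumption. Qed.

Definition interp : R -> R := newton f (-1 :: quad_nodes).
Definition top_divdiff : R := divdiff f (-1 :: quad_nodes ++ 1 :: nil).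

Lemma is_poly_interp : is_poly 6 interp.
Proof. exact (is_poly_newton f (-1 :: quad_nodes)). Qed.

Lemma top_divdiff_nonneg : 0 <= top_divdiff.
Proof.
  apply convex_f; [reflexivity | exact NoDup_quad_nodes_ends|].
  pose proof quad_nodes_in_interval. constructor; [lra|].
  apply List.Forall_app. split; [assumption | repeat constructor; lra].
Qed.

Lemma newton_quad_nodes_right t :
  newton f (quad_nodes ++ 1 :: nil) t = interp t + 2 * top_divdiff * node_poly quad_nodes t.
Proof.
  unfold interp, top_divdiff. rewrite newton_snoc by exact NoDup_quad_nodes_right.
  cbn [newton]. rewrite divdiff_cons_snoc. field.
Qed.

Lemma f_eq_interp x : In x (-1 :: quad_nodes) -> f x = interp x.
Proof. intros Hx. symmetry. exact (newton_interp f _ _ NoDup_quad_nodes_left Hx). Qed.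

Lemma f_at_one : f 1 = interp 1 + 16 / 15 * top_divdiff.
Proof.
  rewrite <- (newton_interp f (quad_nodes ++ 1 :: nil) 1 NoDup_quad_nodes_right)
    by (apply in_or_app; right; left; reflexivity).
  rewrite newton_quad_nodes_right, node_poly_quad_nodes. field.
Qed.

(* Both bounds are interpolants at six nodes, with node polynomials [w (t + 1)] and
   [w (t - 1)] for [w := node_poly quad_nodes]; use the one whose node polynomial is
   nonpositive at [t]. *)
Lemma f_le_interp t : -1 <= t <= 1 ->
  f t <= interp t + 2 * top_divdiff * Rmax (node_poly quad_nodes t) 0.
Proof.
  intros Ht. pose proof top_divdiff_nonneg as HK. pose proof quad_nodes_in_interval as Hin.
  destruct (Rle_dec (node_poly quad_nodes t) 0) as [Hw|Hw].
  - assert (Hf : f t <= interp t).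
    { apply (m_convex_le_newton 5 _ f convex_f).
      + reflexivity.
      + exact NoDup_quad_nodes_left.
      + constructor; [lra | exact Hin].
      + exact Ht.
      + cbn [node_poly]. nra. }
    rewrite Rmax_right by exact Hw. lra.
  - rewrite Rmax_left by lra. rewrite <- newton_quad_nodes_right.
    apply (m_convex_le_newton 5 _ f convex_f).
    + rewrite length_app. reflexivity.
    + exact NoDup_quad_nodes_right.
    + apply List.Forall_app. split; [exact Hin | repeat constructor; lra].
    + exact Ht.
    + rewrite node_poly_snoc. nra.
Qed.

Lemma RInt_le_simpson_gauss_interp :
  RInt f (-1) 1 <= simpson_gauss_rule interp + 1358 / 10125 * top_divdiff.
Proof.
  set (bound := fun t => interp t + 2 * top_divdiff * Rmax (node_poly quad_nodes t) 0).
  assert (Hbound : is_RInt bound (-1) 1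
                     (simpson_gauss_rule interp + 2 * top_divdiff * (679 / 10125))).
  { apply (is_RInt_plus (V := R_NormedModule));
      [exact (simpson_gauss_rule_exact _ is_poly_interp)|].
    apply (is_RInt_scal (V := R_NormedModule)).
    eapply is_RInt_ext; [|exact is_RInt_pos_part_quad_node_poly].
    intros t _. rewrite node_poly_quad_nodes. reflexivity. }
  apply (Rle_trans _ (RInt bound (-1) 1)).
  - apply RInt_le; [lra | exact (m_convex_ex_RInt 4 (-1) 1 f convex_f ltac:(lra))
                   | eexists; exact Hbound |].
    intros t Ht. apply f_le_interp. lra.
  - rewrite (is_RInt_unique _ _ _ _ Hbound). lra.
Qed.

Lemma f_eq_interp_rule_nodes :
  f (-1) = interp (-1) /\ f 0 = interp 0 /\
  f (- (sqrt 3 / 3)) = interp (- (sqrt 3 / 3)) /\ f (sqrt 3 / 3) = interp (sqrt 3 / 3) /\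
  f (- (sqrt 5 / 5)) = interp (- (sqrt 5 / 5)) /\ f (sqrt 5 / 5) = interp (sqrt 5 / 5).
Proof. repeat split; apply f_eq_interp; unfold quad_nodes; cbn [In]; auto 7. Qed.

Lemma simpson_gauss_rule_f :
  simpson_gauss_rule f = simpson_gauss_rule interp + 32 / 225 * top_divdiff.
Proof.
  destruct f_eq_interp_rule_nodes as (Em1 & E0 & Emb & Eb & _).
  unfold simpson_gauss_rule. rewrite f_at_one, Em1, E0, Emb, Eb. lra.
Qed.

Lemma lobatto_rule_f : lobatto_rule f = lobatto_rule interp + 8 / 45 * top_divdiff.
Proof.
  destruct f_eq_interp_rule_nodes as (Em1 & _ & _ & _ & Ema & Ea).
  unfold lobatto_rule. rewrite f_at_one, Em1, Ema, Ea. lra.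
Qed.

Lemma simpson_gauss_rule_eq_lobatto_rule_interp :
  simpson_gauss_rule interp = lobatto_rule interp.
Proof.
  rewrite <- (is_RInt_unique _ _ _ _ (simpson_gauss_rule_exact _ is_poly_interp)).
  exact (is_RInt_unique _ _ _ _ (lobatto_rule_exact _ is_poly_interp)).
Qed.

End Proposition4.

Theorem proposition4 (f : R -> R) :
  m_convex 5 (fun x => -1 <= x <= 1) f ->
  RInt f (-1) 1 <=
    2 / 5 * (1 / 3 * (f (-1) + 4 * f 0 + f 1))
    + 3 / 5 * (f (- (sqrt 3 / 3)) + f (sqrt 3 / 3))
  /\
  2 / 5 * (1 / 3 * (f (-1) + 4 * f 0 + f 1))
    + 3 / 5 * (f (- (sqrt 3 / 3)) + f (sqrt 3 / 3))
  <= 1 / 6 * (f (-1) + f 1)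
     + 5 / 6 * (f (- (sqrt 5 / 5)) + f (sqrt 5 / 5)).
Proof.
  intros convex_f.
  change (RInt f (-1) 1 <= simpson_gauss_rule f /\ simpson_gauss_rule f <= lobatto_rule f).
  pose proof (top_divdiff_nonneg f convex_f).
  pose proof (RInt_le_simpson_gauss_interp f convex_f).
  pose proof (simpson_gauss_rule_eq_lobatto_rule_interp f).
  rewrite (simpson_gauss_rule_f f), (lobatto_rule_f f).
  split; lra.
Qed.
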